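(* Let $G_{n,d}$ be a uniformly random $d$-regular graph on $[n]$ ($dn$ even) and let $\{a_i,b_i\}$, $i=1,\dots,k$, be distinct pairs of distinct vertices with $k\le n/(8d)$. Then, for $n$ sufficiently large, $$\mathbb P\big(\{a_i,b_i\}\in E(G_{n,d})\text{ for all }1\le i\le k\big)\le\left(\frac{20d}{n}\right)^{k}.$$ *)

From HB Require Import structures.
From mathcomp Require Import all_boot all_order all_algebra.
Set Implicit Arguments. Unset Strict Implicit. Unset Printing Implicit Defensive.
Import Order.TTheory GRing.Theory Num.Theory.

(* A (simple) graph on vertex set [n] = 'I_n is given by its edge set:
   a set of 2-element subsets of 'I_n. *)
Definition is_simple_graph (n : nat) (E : {set {set 'I_n}}) : bool :=
  [forall e in E, #|e| == 2].

Definition is_regular (n d : nat) (E : {set {set 'I_n}}) : bool :=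
  is_simple_graph E && [forall v : 'I_n, #|[set e in E | v \in e]| == d].

Definition regular_graphs (n d : nat) : {set {set {set 'I_n}}} :=
  [set E | is_regular d E].

Arguments regular_graphs : clear implicits.
Definition prob_Gnd (n d : nat) (A : pred {set {set 'I_n}}) : rat :=
  (#|[set E in regular_graphs n d | A E]|%:R / #|regular_graphs n d|%:R)%R.
Arguments prob_Gnd : clear implicits.

From HB Require Import structures.
From mathcomp Require Import all_boot all_order all_algebra.
From mathcomp Require Import zify.
Import Order.TTheory GRing.Theory Num.Theory.
Set Implicit Arguments. Unset Strict Implicit. Unset Printing Implicit Defensive.

(* The proof is the classical switching argument.  Fix a set S of edges and a
   pair {a,b} outside S, and let A (resp. A1) be the d-regular graphs on [n]
   containing S (resp. S and {a,b}).  For G in A1 and a dart (x,y) of G that is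
   "switchable" (x, y not in {a,b}, {x,y} not in S, and {a,x}, {b,y} not edges)
   the switching G - ab - xy + ax + by is again a d-regular graph containing S,
   in which {a,x} and {b,y} are edges; given (x,y) the switching is injective.
   Every G has at least dn - (4d + 2|S| + 2d^2) switchable darts, while every
   graph of A has at most d^2 pairs (x,y) with {a,x}, {b,y} edges.  Double
   counting gives |A1| (dn - 4d - 2|S| - 2d^2) <= d^2 |A|, hence
   |A1| n <= 20 d |A| when n >= 80 and 8dk <= n.  Adding the k prescribed pairs
   one at a time and telescoping these ratio bounds yields the theorem. *)

Lemma eq_set2 (T : finType) (x y u v : T) :
  [set x; y] = [set u; v] -> (x = u /\ y = v) \/ (x = v /\ y = u).
Proof.
move=> E.
have hx : x \in [set u; v] by rewrite -E set21.
have hy : y \in [set u; v] by rewrite -E set22.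
have hu : u \in [set x; y] by rewrite E set21.
have hv : v \in [set x; y] by rewrite E set22.
move: hx hy hu hv; rewrite !in_set2.
case/orP=> /eqP hx; subst x.
- case/orP=> /eqP hy; subst y; last by left.
  by move=> _ /orP [] /eqP ->; left.
- case/orP=> /eqP hy; subst y; first by right.
  by move=> /orP [] /eqP -> _; [right|left].
Qed.

Lemma set2_injr (T : finType) (x y y' : T) : [set x; y] = [set x; y'] -> y = y'.
Proof. by case/eq_set2=> [[_ ->] //| [-> ->]]. Qed.

Lemma cards2_neq (T : finType) (x y : T) : #|[set x; y]| = 2 -> x != y.
Proof. by apply: contra_eqN => /eqP ->; rewrite setUid cards1. Qed.

Lemma cardsU1I (T : finType) (e : T) (H C : {set T}) :
  #|(e |: H) :&: C| = ((e \in C) && (e \notin H)) + #|H :&: C|.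
Proof.
rewrite setIUl; case eC: (e \in C) => /=.
  have -> : [set e] :&: C = [set e] by apply/setIidPl; rewrite sub1set.
  by rewrite cardsU1 inE eC andbT.
have -> : [set e] :&: C = set0.
  by apply/setP=> z; rewrite !inE; apply/negbTE/andP=> [[/eqP ->]]; rewrite eC.
by rewrite set0U.
Qed.

Lemma cardsD1I (T : finType) (e : T) (H C : {set T}) :
  #|(H :\ e) :&: C| + ((e \in C) && (e \in H)) = #|H :&: C|.
Proof.
have -> : (H :\ e) :&: C = (H :&: C) :\ e.
  by apply/setP=> z; rewrite !inE; case: (z == e); case: (z \in H).
by rewrite [RHS](cardsD1 e) inE addnC andbC.
Qed.

(* Degree counts in a d-regular graph.  A dart is an ordered pair (x,y) with
   {x,y} an edge; each vertex is the tail of exactly d darts. *)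
Section RegularGraph.
Variables (n d : nat) (G : {set {set 'I_n}}).
Hypothesis regG : is_regular d G.

Lemma regular_edge_card e : e \in G -> #|e| = 2.
Proof. by case/andP: regG => /forall_inP H _ /H /eqP. Qed.

Lemma regular_degree v : #|[set e in G | v \in e]| = d.
Proof. by case/andP: regG => _ /forallP /(_ v) /eqP. Qed.

Lemma card_neighbours v : #|[set y | [set v; y] \in G]| = d.
Proof.
rewrite -(regular_degree v).
have -> : [set e in G | v \in e] = (fun y => [set v; y]) @: [set y | [set v; y] \in G].
  apply/setP=> e; rewrite inE; apply/andP/imsetP.
  - move=> [eG ve]; have /eqP/cards2P [x [y [xy E]]] := regular_edge_card eG.
    move: eG ve; rewrite E in_set2 => eG /orP [] /eqP ->.
    + by exists y; rewrite ?inE.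
    + by exists x; rewrite ?inE setUC.
  - by move=> [y]; rewrite inE => yG ->; rewrite yG set21.
by rewrite card_in_imset //; move=> y1 y2 _ _; apply: set2_injr.
Qed.

Lemma card_darts_fst (A : {set 'I_n}) :
  #|[set p : 'I_n * 'I_n | ([set p.1; p.2] \in G) && (p.1 \in A)]| = d * #|A|.
Proof.
transitivity (\sum_(p : 'I_n * 'I_n | (p.1 \in A) && ([set p.1; p.2] \in G)) 1).
  by rewrite sum1dep_card; apply: eq_card => p; rewrite !inE andbC.
rewrite -(pair_big_dep (mem A) (fun i j => [set i; j] \in G) (fun _ _ => 1)) /=.
rewrite (eq_bigr (fun _ => d)); last first.
  by move=> i _; rewrite sum1dep_card card_neighbours.
by rewrite sum_nat_const mulnC.
Qed.

Lemma card_darts_snd (A : {set 'I_n}) :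
  #|[set p : 'I_n * 'I_n | ([set p.1; p.2] \in G) && (p.2 \in A)]| = d * #|A|.
Proof.
rewrite -card_darts_fst -(card_imset _ (can_inj (@swap_pairK _ _))).
apply: eq_card => -[x y]; apply/imsetP/idP => [[[u v]] | H].
- by rewrite inE /= => H [-> ->]; rewrite inE /= setUC.
- by exists (y, x); rewrite // inE /= setUC; move: H; rewrite inE.
Qed.

End RegularGraph.

(* Each edge of S carries exactly two darts. *)
Lemma card_darts_le n (S : {set {set 'I_n}}) :
  #|[set p : 'I_n * 'I_n | [set p.1; p.2] \in S]| <= 2 * #|S|.
Proof.
pose f (p : 'I_n * 'I_n) := ([set p.1; p.2], (p.1 < p.2)%N).
rewrite -(card_in_imset (f := f)); last first.
  move=> [x y] [u v] _ _ [] /= /eq_set2 [[-> ->] //| [-> ->]].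
  by case: (ltngtP u v) => // /val_inj ->.
rewrite mulnC -card_bool -cardsT -cardsX.
apply: subset_leq_card; apply/subsetP=> z /imsetP [[x y]]; rewrite inE => H ->.
by rewrite inE /= H inE.
Qed.

Definition graphs_containing n d (S : {set {set 'I_n}}) : {set {set {set 'I_n}}} :=
  [set G in regular_graphs n d | S \subset G].

Lemma graphs_containingU1 n d (e : {set 'I_n}) (S : {set {set 'I_n}}) :
  graphs_containing d (e |: S) = [set G in graphs_containing d S | e \in G].
Proof.
apply/setP => G; rewrite !inE subUset sub1set.
by case: (is_regular d G); case: (e \in G); case: (S \subset G).
Qed.

Lemma card_pairset (T U : finType) (P : T -> pred U) :
  #|[set t : T * U | P t.1 t.2]| = \sum_(x : T) #|[set u | P x u]|.
Proof.
transitivity (\sum_(t : T * U | predT t.1 && P t.1 t.2) 1); first by rewrite sum1dep_card.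
rewrite -(pair_big_dep predT P (fun _ _ => 1)).
by apply: eq_bigr => x _; rewrite sum1dep_card.
Qed.

Section Switching.
Variables (n : nat) (a b : 'I_n).
Implicit Types (S G : {set {set 'I_n}}) (x y : 'I_n).

Definition switch G x y : {set {set 'I_n}} :=
  [set a; x] |: ([set b; y] |: ((G :\ [set a; b]) :\ [set x; y])).

Definition switchable S G : {set 'I_n * 'I_n} :=
  [set p : 'I_n * 'I_n | [&& [set p.1; p.2] \in G, p.1 \notin [set a; b],
     p.2 \notin [set a; b], [set p.1; p.2] \notin S, [set a; p.1] \notin G
     & [set b; p.2] \notin G]].

Lemma switchableP d S G x y :
  is_regular d G -> (x, y) \in switchable S G ->
  [/\ [set x; y] \in G, x != a, x != b, y != a &
   [/\ y != b, x != y, [set x; y] \notin S, [set a; x] \notin G & [set b; y] \notin G]].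
Proof.
move=> regG; rewrite inE /= => /and5P [xyG xab yab -> /andP [-> ->]].
move: xab yab; rewrite !in_set2 !negb_or => /andP [-> ->] /andP [-> ->].
by rewrite xyG; split=> //; split=> //; apply/cards2_neq/(regular_edge_card regG).
Qed.

Lemma in_switch G x y e :
  e \in switch G x y =
  [|| e == [set a; x], e == [set b; y] | [&& e != [set x; y], e != [set a; b] & e \in G]].
Proof. by rewrite /switch !in_setU1 !in_setD1. Qed.

(* Switching trades the edges ab, xy for ax, by: every degree is unchanged. *)
Lemma switch_regular d S G x y :
  is_regular d G -> a != b -> [set a; b] \in G -> (x, y) \in switchable S G ->
  is_regular d (switch G x y).
Proof.
move=> regG ab abG sw; have [xyG xa xb ya [yb xy _ axG byG]] := switchableP regG sw.
have ax_by : [set a; x] != [set b; y].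
  by apply/eqP => /eq_set2 [[/eqP] | [/eqP]]; rewrite ?(negbTE ab) // eq_sym (negbTE ya).
have xy_ab : [set x; y] != [set a; b].
  by apply/eqP => /eq_set2 [[/eqP] | [/eqP]]; rewrite ?(negbTE xa) ?(negbTE xb).
apply/andP; split.
  apply/forall_inP => e; rewrite in_switch => /or3P [/eqP -> | /eqP -> | /and3P [_ _ eG]].
  - by rewrite cards2 (eq_sym a x) xa.
  - by rewrite cards2 (eq_sym b y) yb.
  - by rewrite (regular_edge_card regG eG).
apply/forallP => v; apply/eqP; rewrite setIdE /switch !cardsU1I.
rewrite -(regular_degree regG v) setIdE -(cardsD1I [set a; b] G).
rewrite -(cardsD1I [set x; y] (G :\ [set a; b])).
rewrite !in_setU1 !in_setD1 (negbTE ax_by) (negbTE axG) (negbTE byG) xy_ab xyG abG.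
rewrite !andbF !orbF /= !inE !andbT addnA addnC -addnA; congr (_ + _).
have ax : (a == x) = false by rewrite eq_sym (negbTE xa).
have ay : (a == y) = false by rewrite eq_sym (negbTE ya).
have bx : (b == x) = false by rewrite eq_sym (negbTE xb).
have by_ : (b == y) = false by rewrite eq_sym (negbTE yb).
have ba : (b == a) = false by rewrite eq_sym (negbTE ab).
have [->|va] := eqVneq v a; first by rewrite ?eqxx ?(negbTE ab) ?ax ?ay.
have [->|vb] := eqVneq v b; first by rewrite ?eqxx ?ba ?bx ?by_.
have [->|vx] := eqVneq v x; first by rewrite ?eqxx ?(negbTE xa) ?(negbTE xb) ?(negbTE xy).
by case: (v == y).
Qed.

Lemma switch_sub S G x y :
  S \subset G -> [set a; b] \notin S -> [set x; y] \notin S ->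
  S \subset switch G x y.
Proof.
move=> SG abS xyS; apply/subsetP => e eS; rewrite in_switch; apply/or3P/Or33.
apply/and3P; split; last exact: (subsetP SG).
- by apply: contraNneq xyS => <-.
- by apply: contraNneq abS => <-.
Qed.

Lemma switch_inj d d' S G G' x y :
  is_regular d G -> is_regular d' G' ->
  [set a; b] \in G -> [set a; b] \in G' ->
  (x, y) \in switchable S G -> (x, y) \in switchable S G' ->
  switch G x y = switch G' x y -> G = G'.
Proof.
move=> regG regG' abG abG' sw sw' E.
have [xyG _ _ _ [_ _ _ axG byG]] := switchableP regG sw.
have [xyG' _ _ _ [_ _ _ axG' byG']] := switchableP regG' sw'.
apply/setP => e.
have [->|eab] := eqVneq e [set a; b]; first by rewrite abG abG'.
have [->|exy] := eqVneq e [set x; y]; first by rewrite xyG xyG'.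
have [->|eax] := eqVneq e [set a; x]; first by rewrite (negbTE axG) (negbTE axG').
have [->|eby] := eqVneq e [set b; y]; first by rewrite (negbTE byG) (negbTE byG').
move/setP/(_ e): E; rewrite !in_switch.
by rewrite (negbTE eax) (negbTE eby) exy eab.
Qed.

(* All but at most 4d + 2|S| + 2d^2 of the dn darts of G are switchable: the
   others have an endpoint in {a,b}, lie on S, or have a tail adjacent to a or
   a head adjacent to b. *)
Lemma card_switchable d S G :
  is_regular d G -> d * n <= #|switchable S G| + (4 * d + 2 * #|S| + 2 * (d * d)).
Proof.
move=> regG; set ab := [set a; b].
pose darts (P : pred ('I_n * 'I_n)) := [set p | ([set p.1; p.2] \in G) && P p].
have all_darts : #|darts predT| = d * n.
  by have := card_darts_fst regG setT; rewrite cardsT card_ord => <-; apply: eq_card => p; rewrite !inE.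
have ab2 : #|ab| <= 2 by rewrite cards2; case: (a != b).
have tail_ab : #|darts (fun p => p.1 \in ab)| <= 2 * d.
  by rewrite (card_darts_fst regG) mulnC leq_mul2r ab2 orbT.
have head_ab : #|darts (fun p => p.2 \in ab)| <= 2 * d.
  by rewrite (card_darts_snd regG) mulnC leq_mul2r ab2 orbT.
have tail_a : #|darts (fun p => p.1 \in [set y | [set a; y] \in G])| = d * d.
  by rewrite (card_darts_fst regG) (card_neighbours regG).
have head_b : #|darts (fun p => p.2 \in [set y | [set b; y] \in G])| = d * d.
  by rewrite (card_darts_snd regG) (card_neighbours regG).
have on_S := card_darts_le S.
set sS := [set p | [set p.1; p.2] \in S] in on_S.
have cover : darts predT \subset switchable S G :|: (darts (fun p => p.1 \in ab)
    :|: (darts (fun p => p.2 \in ab) :|: (sS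
    :|: (darts (fun p => p.1 \in [set y | [set a; y] \in G])
    :|: darts (fun p => p.2 \in [set y | [set b; y] \in G]))))).
  apply/subsetP => p; rewrite !inE /= andbT => pG; rewrite pG /=.
  case: (p.1 == a); case: (p.1 == b); case: (p.2 == a); case: (p.2 == b);
  case: ([set p.1; p.2] \in S);
  case: ([set a; p.1] \in G); by case: ([set b; p.2] \in G).
rewrite -all_darts (leq_trans (subset_leq_card cover)) //.
have -> : 4 * d + 2 * #|S| + 2 * (d * d) = 2 * d + (2 * d + (2 * #|S| + (d * d + d * d))).
  by lia.
apply: leq_trans (leq_card_setU _ _).1 _; rewrite leq_add2l.
apply: leq_trans (leq_card_setU _ _).1 (leq_add tail_ab _).
apply: leq_trans (leq_card_setU _ _).1 (leq_add head_ab _).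
apply: leq_trans (leq_card_setU _ _).1 (leq_add on_S _).
by apply: leq_trans (leq_card_setU _ _).1 _; rewrite tail_a head_b.
Qed.

Definition switch_sources d S : {set {set {set 'I_n}} * ('I_n * 'I_n)} :=
  [set t | (t.1 \in graphs_containing d ([set a; b] |: S)) && (t.2 \in switchable S t.1)].

Definition switch_targets d S : {set {set {set 'I_n}} * ('I_n * 'I_n)} :=
  [set t | [&& t.1 \in graphs_containing d S, [set a; t.2.1] \in t.1 & [set b; t.2.2] \in t.1]].

Lemma card_switch_sources d S :
  #|graphs_containing d ([set a; b] |: S)| * (d * n)
  <= #|switch_sources d S|
     + #|graphs_containing d ([set a; b] |: S)| * (4 * d + 2 * #|S| + 2 * (d * d)).
Proof.
rewrite /switch_sources (card_pairset (fun G p => (G \in _) && (p \in switchable S G))).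
rewrite -!sum_nat_const big_mkcond [X in _ + X]big_mkcond /= -big_split /=.
apply: leq_sum => G _; case GA1: (G \in _) => //=.
move: GA1; rewrite !inE => /andP [regG _].
by rewrite (eq_card (B := switchable S G)) ?(card_switchable S regG) // => p; rewrite inE.
Qed.

Lemma card_switch_targets d S :
  #|switch_targets d S| <= d * d * #|graphs_containing d S|.
Proof.
rewrite /switch_targets.
rewrite (card_pairset (fun G p => [&& G \in _, [set a; p.1] \in G & [set b; p.2] \in G])).
rewrite mulnC -sum_nat_const [X in _ <= X]big_mkcond /=.
apply: leq_sum => G _; case GA: (G \in _) => /=; last first.
  by rewrite (_ : [set u | false] = set0) ?cards0 //; apply/setP=> u; rewrite !inE.
move: GA; rewrite !inE => /andP [regG _].
rewrite -{1}(card_neighbours regG a) -(card_neighbours regG b) -cardsX; apply: eq_leq.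
by apply: eq_card => -[u v]; rewrite !inE.
Qed.

Lemma in_switch_sources d S G p :
  ((G, p) \in switch_sources d S) =
  [&& is_regular d G, [set a; b] \in G, S \subset G & p \in switchable S G].
Proof.
by rewrite inE /= [G \in _]inE [G \in _]inE subUset sub1set -!andbA.
Qed.

(* Switching is an injection from sources to targets. *)
Lemma card_sources_le_targets d S :
  a != b -> [set a; b] \notin S -> #|switch_sources d S| <= #|switch_targets d S|.
Proof.
move=> ab abS.
pose F (t : {set {set 'I_n}} * ('I_n * 'I_n)) := (switch t.1 t.2.1 t.2.2, t.2).
rewrite -(card_in_imset (f := F)); last first.
  move=> [G [x y]] [G' [x' y']]; rewrite !in_switch_sources.
  move=> /and4P [regG abG _ sw] /and4P [regG' abG' _ sw'] [E ex ey].
  subst x' y'; by rewrite (switch_inj regG regG' abG abG' sw sw' E).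
apply/subset_leq_card/subsetP => t /imsetP [[G [x y]]].
rewrite in_switch_sources => /and4P [regG abG SG sw] ->.
have [_ _ _ _ [_ _ xyS _ _]] := switchableP regG sw.
by rewrite inE /F /= !inE (switch_regular regG ab abG sw) (switch_sub SG abS xyS) !eqxx !orbT.
Qed.

Lemma switching_double_count d S :
  a != b -> [set a; b] \notin S ->
  #|graphs_containing d ([set a; b] |: S)| * (d * n)
  <= d * d * #|graphs_containing d S|
     + #|graphs_containing d ([set a; b] |: S)| * (4 * d + 2 * #|S| + 2 * (d * d)).
Proof.
move=> ab abS; have := card_sources_le_targets d ab abS.
have := card_switch_sources d S; have := card_switch_targets d S; lia.
Qed.

End Switching.

(* The arithmetic turning the double count into a ratio bound: the error term
   4d + 2s + 2d^2 is at most 2dn/5 once n >= 80, n >= 20d and 8ds <= n. *)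
Lemma switching_arith (X Y d n s : nat) :
  0 < d -> 80 <= n -> 8 * d * s <= n -> X <= Y ->
  X * (d * n) <= d * d * Y + X * (4 * d + 2 * s + 2 * (d * d)) ->
  X * n <= 20 * d * Y.
Proof.
move=> dpos n80 hs XY hX.
have [hn | hn] := leqP n (20 * d); first by rewrite mulnC leq_mul.
have hL : 20 * (4 * d + 2 * s + 2 * (d * d)) <= 8 * (d * n) by nia.
have : 12 * (X * (d * n)) <= 20 * (d * d * Y).
  by have := leq_mul (leqnn X) hL; nia.
by rewrite -(leq_pmul2l dpos); nia.
Qed.

Lemma graphs_containing_ratio n d k (a b : 'I_n) (S : {set {set 'I_n}}) :
  80 <= n -> 8 * d * k <= n -> #|S| <= k -> a != b -> [set a; b] \notin S ->
  #|graphs_containing d ([set a; b] |: S)| * n <= 20 * d * #|graphs_containing d S|.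
Proof.
move=> n80 hk hS ab abS.
have [d0 | dpos] := posnP d.
  suff -> : graphs_containing d ([set a; b] |: S) = set0 by rewrite cards0.
  apply/setP => G; rewrite !inE subUset sub1set; apply/negbTE/negP => /and3P [regG abG _].
  have : [set a; b] \in [set e in G | a \in e] by rewrite inE abG set21.
  by rewrite (cards0_eq (etrans (regular_degree regG a) d0)) inE.
apply: switching_arith dpos n80 _ _ (switching_double_count d ab abS).
  by apply: leq_trans hk; rewrite leq_mul2l hS orbT.
rewrite graphs_containingU1; apply/subset_leq_card/subsetP => G.
by rewrite inE => /andP [].
Qed.

Lemma iter_ratio (f : nat -> nat) (n r k : nat) :
  (forall j, j < k -> f j.+1 * n <= r * f j) -> f k * n ^ k <= r ^ k * f 0.
Proof.
elim: k => [|k IH] hf; first by rewrite muln1 mul1n.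
have hk : f k * n ^ k <= r ^ k * f 0 by apply: IH => j /ltnW; apply: hf.
have hs : f k.+1 * n * n ^ k <= r * f k * n ^ k by rewrite leq_mul2r hf ?orbT.
by rewrite expnS mulnA (leq_trans hs) // -mulnA expnS -mulnA leq_mul2l hk orbT.
Qed.

Definition first_pairs n k (a b : 'I_k -> 'I_n) (j : nat) : {set {set 'I_n}} :=
  [set [set a i; b i] | i : 'I_k & (i < j)%N].

Section FirstPairs.
Variables (n k : nat) (a b : 'I_k -> 'I_n).

Lemma first_pairs0 : first_pairs a b 0 = set0.
Proof. by apply/setP => e; rewrite inE; apply/imsetP => -[i]; rewrite inE ltn0. Qed.

Lemma first_pairsS (i : 'I_k) : first_pairs a b i.+1 = [set a i; b i] |: first_pairs a b i.
Proof.
apply/setP => e; rewrite in_setU1; apply/imsetP/idP.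
- move=> [j]; rewrite inE ltnS leq_eqVlt => /orP [/eqP /val_inj -> -> | ji ->].
    by rewrite eqxx.
  by apply/orP; right; apply/imsetP; exists j; rewrite ?inE.
- case/orP => [/eqP -> | /imsetP [j]]; first by exists i; rewrite ?inE /=.
  by rewrite inE => ji ->; exists j; rewrite // inE ltnS ltnW.
Qed.

Lemma card_first_pairs j : #|first_pairs a b j| <= k.
Proof. by rewrite (leq_trans (leq_imset_card _ _)) // -[X in _ <= X](card_ord k) max_card. Qed.

Lemma first_pairs_notin (i : 'I_k) :
  injective (fun i => [set a i; b i]) -> [set a i; b i] \notin first_pairs a b i.
Proof. by move=> inj; apply/imsetP => -[j]; rewrite inE => ji /inj ij; rewrite ij ltnn in ji. Qed.

Lemma sub_first_pairs_all (G : {set {set 'I_n}}) :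
  (first_pairs a b k \subset G) = [forall i, [set a i; b i] \in G].
Proof.
apply/subsetP/forallP => [H i | H e /imsetP [i _ ->]]; last exact: H.
by apply: H; apply/imsetP; exists i; rewrite ?inE.
Qed.

End FirstPairs.

Lemma prob_Gnd_le n d (A : pred {set {set 'I_n}}) (r m k : nat) :
  0 < m -> #|[set E in regular_graphs n d | A E]| * m ^ k <= r ^ k * #|regular_graphs n d| ->
  (prob_Gnd n d A <= (r%:R / m%:R) ^+ k)%R.
Proof.
move=> mpos hcount; rewrite /prob_Gnd.
have [->|Ypos] := posnP #|regular_graphs n d|.
  by rewrite invr0 mulr0 exprn_ge0 // divr_ge0 // ler0n.
rewrite expr_div_n ler_pdivrMr ?ltr0n // mulrAC ler_pdivlMr; last first.
  by rewrite -natrX ltr0n expn_gt0 mpos.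
by rewrite -!natrX -!natrM ler_nat.
Qed.

Theorem mainTheorem7 :
  exists N : nat, forall (n d k : nat) (a b : 'I_k -> 'I_n),
    (N <= n)%N ->
    ~~ odd (d * n) ->
    (forall i, a i != b i) ->
    injective (fun i => [set a i; b i]) ->
    (8 * d * k <= n)%N ->
    (prob_Gnd n d (fun E => [forall i, [set a i; b i] \in E])
       <= ((20 * d)%:R / n%:R) ^+ k)%R.
Proof.
exists 80 => n d k a b n80 _ ab inj hk.
pose f j := #|graphs_containing d (first_pairs a b j)|.
have ratio j : j < k -> f j.+1 * n <= 20 * d * f j.
  move=> jk; rewrite /f -[j]/(nat_of_ord (Ordinal jk)) first_pairsS.
  exact: graphs_containing_ratio n80 hk (card_first_pairs _ _ _) (ab _) (first_pairs_notin _ inj).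
apply: prob_Gnd_le; first exact: leq_trans n80.
have all_graphs : graphs_containing d (first_pairs a b 0) = regular_graphs n d.
  by apply/setP => G; rewrite /graphs_containing first_pairs0 inE sub0set andbT.
have all_pairs : graphs_containing d (first_pairs a b k)
    = [set E in regular_graphs n d | [forall i, [set a i; b i] \in E]].
  by apply/setP => G; rewrite /graphs_containing !inE sub_first_pairs_all.
by have := iter_ratio ratio; rewrite /f all_graphs all_pairs.
Qed.
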